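(* There exists a system $\dot x=f(x,u)$, $y=h(x)$, with $f:\mathbb{R}^n\times\mathbb{R}^m\to\mathbb{R}^n$ and $h:\mathbb{R}^n\to\mathbb{R}^p$ locally Lipschitz, $f(0,0)=0$, $h(0)=0$, which is ROS but not IOS.
   Context: Inputs are measurable, locally essentially bounded functions $u:[0,\infty)\to\mathbb{R}^m$; $\|u\|$ is the essential supremum of $|u(t)|$ (Euclidean norm). $x(\cdot,\xi,u)$ denotes the maximal solution of $\dot x=f(x,u)$, $x(0)=\xi$, and $y(t,\xi,u)=h(x(t,\xi,u))$. The system is forward complete if all such solutions are defined on $[0,\infty)$. Classes: $\mathcal{K}$ = continuous strictly increasing $\gamma:[0,\infty)\to[0,\infty)$ with $\gamma(0)=0$; $\mathcal{K}_\infty$ = unbounded $\mathcal{K}$ functions; $\mathcal{KL}$ = functions $\beta(s,t)$ of class $\mathcal{K}$ in $s$ and decreasing to $0$ in $t$. IOS: the system is forward complete and there exist $\beta\in\mathcal{KL}$, $\gamma\in\mathcal{K}$ with $|y(t,\xi,u)|\le\beta(|\xi|,t)+\gamma(\|u\|)$ for all $t\ge0$, $u$, $\xi$. ROS: the system is forward complete and there exists a smooth $\lambda\in\mathcal{K}_\infty$ such that the system $\dot x=f(x,d\,\lambda(|h(x)|))$, $y=h(x)$, with inputs $d$ measurable locally essentially bounded taking values in the closed unit ball of $\mathbb{R}^m$, is forward complete, and there exists $\beta\in\mathcal{KL}$ with $|y_\lambda(t,\xi,d)|\le\beta(|\xi|,t)$ for all $t\ge0$, $\xi$, $d$, where $y_\lambda(\cdot,\xi,d)$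 is the output of this closed-loop system from $\xi$ under $d$. *)

From HB Require Import structures.
From mathcomp Require Import all_boot all_order all_algebra.
From mathcomp Require Import all_classical all_reals all_analysis.
From mathcomp Require Import Rstruct Rstruct_topology ess_sup_inf.
From Stdlib Require Rdefinitions.
Notation R := Rdefinitions.R.
Set Implicit Arguments. Unset Strict Implicit. Unset Printing Implicit Defensive.
Import Order.TTheory GRing.Theory Num.Theory.
Import numFieldNormedType.Exports.
Local Open Scope classical_set_scope.
Local Open Scope ring_scope.

Definition vec (n : nat) := 'I_n -> R.

Definition mR := measurableTypeR R.

Definition enorm (n : nat) (x : vec n) : R := Num.sqrt (\sum_(i < n) x i ^+ 2).

Definition pnorm (n m : nat) (x : vec n) (u : vec m) : R :=
  Num.sqrt (\sum_(i < n) x i ^+ 2 + \sum_(j < m) u j ^+ 2).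

Definition I0 (t : R) : set mR := `[0, t].

Definition vsub (n : nat) (x y : vec n) : vec n := fun i => x i - y i.

Definition vzero (n : nat) : vec n := fun _ => 0.

Definition loc_lipschitz_h (n p : nat) (h : vec n -> vec p) : Prop :=
  forall z : vec n, exists eps : R, exists L : R, 0 < eps /\
    forall x y : vec n, enorm (vsub x z) < eps -> enorm (vsub y z) < eps ->
      enorm (vsub (h x) (h y)) <= L * enorm (vsub x y).

Definition loc_lipschitz_f (n m : nat) (f : vec n -> vec m -> vec n) : Prop :=
  forall (z : vec n) (w : vec m), exists eps : R, exists L : R, 0 < eps /\
    forall (x1 x2 : vec n) (u1 u2 : vec m),
      pnorm (vsub x1 z) (vsub u1 w) < eps -> pnorm (vsub x2 z) (vsub u2 w) < eps ->
      enorm (vsub (f x1 u1) (f x2 u2)) <= L * pnorm (vsub x1 x2) (vsub u1 u2).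

(* Inputs: measurable (on [0,oo)), locally essentially bounded functions.
   Values of u at negative times are irrelevant. *)
Definition input (m : nat) (u : R -> vec m) : Prop :=
  (forall j : 'I_m, measurable_fun (`[0, +oo[ : set mR) ((fun t => u t j) : mR -> mR)) /\
  (forall T : R, exists M : R,
     \forall t \ae (@lebesgue_measure R), 0 <= t <= T -> enorm (u t) <= M).

Definition input_norm (m : nat) (u : R -> vec m) : \bar R :=
  ess_sup (@lebesgue_measure R)
    (fun t : mR => if 0 <= (t : R) then (enorm (u t))%:E else 0%E).

(* x is a (Caratheodory) solution of xdot = f(x,u), x(0) = xi, on [0,oo):
   for every t >= 0, s |-> f(x s, u s) is integrable on [0,t] and
   x(t) = xi + int_0^t f(x(s),u(s)) ds (componentwise). *)
Definition solution (n m : nat) (f : vec n -> vec m -> vec n)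
  (xi : vec n) (u : R -> vec m) (x : R -> vec n) : Prop :=
  forall t : R, 0 <= t -> forall i : 'I_n,
    (@lebesgue_measure R).-integrable (I0 t) (fun s => (f (x s) (u s) i)%:E) /\
    ((x t i)%:E = (xi i)%:E +
       \int[@lebesgue_measure R]_(s in (I0 t)) (f (x s) (u s) i)%:E)%E.

(* forward completeness w.r.t. a class of admissible inputs:
   a solution exists on [0,oo). Since f is locally Lipschitz, the maximal
   solution is unique, so this says the maximal solution is defined on [0,oo). *)
Definition fwd_complete (n m : nat) (adm : (R -> vec m) -> Prop)
  (f : vec n -> vec m -> vec n) : Prop :=
  forall (xi : vec n) (u : R -> vec m), adm u -> exists x, solution f xi u x.

Definition classK (g : R -> R) : Prop :=
  g 0 = 0 /\ {within `[0, +oo[, continuous g} /\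
  (forall a b : R, 0 <= a -> a < b -> g a < g b).

Definition classKinf (g : R -> R) : Prop :=
  classK g /\ (forall M : R, exists s : R, 0 <= s /\ M < g s).

Definition classKL (b : R -> R -> R) : Prop :=
  (forall t : R, 0 <= t -> classK (fun s => b s t)) /\
  (forall s : R, 0 <= s ->
     (forall t1 t2 : R, 0 <= t1 -> t1 <= t2 -> b s t2 <= b s t1) /\
     (b s t @[t --> +oo] --> (0:R))).

Definition smooth (g : R -> R) : Prop :=
  forall (k : nat) (x : R), derivable (@derive1n R R^o k g) x 1.

Definition IOS (n m p : nat) (f : vec n -> vec m -> vec n) (h : vec n -> vec p) : Prop :=
  fwd_complete (@input m) f /\
  exists beta gamma, classKL beta /\ classK gamma /\
    forall (xi : vec n) (u : R -> vec m) (x : R -> vec n) (M : R),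
      input u -> solution f xi u x -> input_norm u = M%:E ->
      forall t : R, 0 <= t -> enorm (h (x t)) <= beta (enorm xi) t + gamma M.

Definition unit_input (m : nat) (d : R -> vec m) : Prop :=
  input d /\ (forall t : R, 0 <= t -> enorm (d t) <= 1).

Definition ROS (n m p : nat) (f : vec n -> vec m -> vec n) (h : vec n -> vec p) : Prop :=
  fwd_complete (@input m) f /\
  exists lam : R -> R, smooth lam /\ classKinf lam /\
    let fl := fun (x : vec n) (d : vec m) => f x (fun j => d j * lam (enorm (h x))) in
    fwd_complete (@unit_input m) fl /\
    exists beta, classKL beta /\
      forall (xi : vec n) (d : R -> vec m) (x : R -> vec n),
        unit_input d -> solution fl xi d x ->
        forall t : R, 0 <= t -> enorm (h (x t)) <= beta (enorm xi) t.

From mathcomp Require Import all_boot all_order all_algebra.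
From mathcomp Require Import all_classical all_reals all_analysis.
From mathcomp Require Import Rstruct Rstruct_topology ess_sup_inf.
From mathcomp Require Import lra ring.
Set Implicit Arguments.
Unset Strict Implicit.
Unset Printing Implicit Defensive.
Import Order.TTheory GRing.Theory Num.Theory.
Local Open Scope classical_set_scope.
Local Open Scope ring_scope.

(* The counterexample has state x = (x0, x1, x2), scalar input u and output
   y = |x2| min((x1 - x0)^+, |x0|).  The coordinate x2 is constant, x0 drifts at
   speed |x2|, and u acts on x1 only through the dead zone
   x1' = min(1/2, (u - |x2| |x0|)^+).  Since |y| <= |x2| |x0|, every feedback
   d |y| with |d| <= 1 stays inside the dead zone: x1 is frozen, x0 overtakes it and
   |y(t)| <= 3 |xi|^2 / (1 + t), so the system is ROS with lambda = id.  With u = 1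
   and xi = (0, 0, e), however, the dead zone stays open until time 1/(2 e^2), which
   pushes x1 above 1/(4 e^2) while x0 = e t; at t = 1/(8 e^3) the output equals
   1/(8 e), unbounded as e -> 0 although |xi| and ||u|| stay bounded: not IOS. *)

Section DistanceBounds.
Variable F : realDomainType.

Lemma ler_dist_min (a b c d : F) : `|Num.min a b - Num.min c d| <= `|a - c| + `|b - d|.
Proof.
case: (lerP a b) => ab; case: (lerP c d) => cd;
  rewrite ?(min_l ab) ?(min_r (ltW ab)) ?(min_l cd) ?(min_r (ltW cd));
  case: (lerP 0 (a - c)) => ac; rewrite ?(ger0_norm ac) ?(ltr0_norm ac);
  case: (lerP 0 (b - d)) => bd; rewrite ?(ger0_norm bd) ?(ltr0_norm bd);
  (try (rewrite ler_norml; apply/andP; split)); lra.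
Qed.

Lemma ler_dist_max0 (a b : F) : `|Num.max 0 a - Num.max 0 b| <= `|a - b|.
Proof.
case: (lerP 0 a) => a0; case: (lerP 0 b) => b0;
  rewrite ?(max_r a0) ?(max_l (ltW a0)) ?(max_r b0) ?(max_l (ltW b0));
  case: (lerP 0 (a - b)) => ab; rewrite ?(ger0_norm ab) ?(ltr0_norm ab);
  (try (rewrite ler_norml; apply/andP; split)); lra.
Qed.

Lemma ler_dist_mul (p q p' q' : F) :
  `|p * q - p' * q'| <= `|p| * `|q - q'| + `|q'| * `|p - p'|.
Proof.
have -> : p * q - p' * q' = p * (q - q') + q' * (p - p') by ring.
by rewrite -!normrM ler_normD.
Qed.

End DistanceBounds.

Section EuclideanNorm.
Variables n m : nat.

Lemma enorm_ge0 (x : vec n) : 0 <= enorm x.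
Proof. exact: sqrtr_ge0. Qed.

Lemma sum_sqr_ge0 k (v : vec k) : 0 <= \sum_i v i ^+ 2.
Proof. by apply: sumr_ge0 => i _; exact: sqr_ge0. Qed.

Lemma coord_le_enorm (x : vec n) i : `|x i| <= enorm x.
Proof.
rewrite -sqrtr_sqr ler_sqrt ?sum_sqr_ge0//.
by rewrite (bigD1 i)//= lerDl sumr_ge0// => j _; exact: sqr_ge0.
Qed.

Lemma enorm_le_sum_abs (x : vec n) : enorm x <= \sum_i `|x i|.
Proof.
suff [le_sq sum_ge0] :
    \sum_i x i ^+ 2 <= (\sum_i `|x i|) ^+ 2 /\ 0 <= \sum_i `|x i|.
  by rewrite -(ger0_norm sum_ge0) -sqrtr_sqr ler_sqrt ?sqr_ge0.
elim/big_rec2: _ => [|i s a _ [le_a s0]]; first by rewrite expr0n.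
have xi0 := normr_ge0 (x i); rewrite -[x i ^+ 2]real_normK ?num_real//.
split; [nra | exact: addr_ge0].
Qed.

Lemma enorm_le_pnorml (x : vec n) (u : vec m) : enorm x <= pnorm x u.
Proof. by rewrite ler_sqrt ?addr_ge0 ?sum_sqr_ge0// lerDl sum_sqr_ge0. Qed.

Lemma enorm_le_pnormr (x : vec n) (u : vec m) : enorm u <= pnorm x u.
Proof. by rewrite ler_sqrt ?addr_ge0 ?sum_sqr_ge0// lerDr sum_sqr_ge0. Qed.

Lemma coord_le_ball (x z : vec n) i r : enorm (vsub x z) < r -> `|x i| <= `|z i| + r.
Proof.
move=> xz; have := coord_le_enorm (vsub x z) i; rewrite /vsub.
have := lerB_dist (x i) (z i); lra.
Qed.

End EuclideanNorm.

Lemma enorm1 (v : vec 1) : enorm v = `|v ord0|.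
Proof. by rewrite /enorm big_ord1 sqrtr_sqr. Qed.

Lemma unit_input_le1 (d : R -> vec 1) s : unit_input d -> 0 <= s -> `|d s ord0| <= 1.
Proof. by move=> [_ d1] s0; rewrite -enorm1 d1. Qed.

Lemma smooth_id : smooth id.
Proof.
have D1 : (fun s : R => s : R^o)^`()%classic = cst 1 by apply/funext => s; rewrite derive1_id.
have Dk k : @derive1n R R^o k.+2 id = cst 0.
  elim: k => [|k IHk]; rewrite derive1nS ?derive1n1 ?D1 ?IHk;
  by apply/funext => s; rewrite derive1_cst.
case=> [|[|k]] s; rewrite ?derive1n0 ?derive1n1 ?D1 ?Dk.
- exact: derivable_id.
- exact: derivable_cst.
- exact: derivable_cst.
Qed.

Lemma classKinf_id : classKinf id.
Proof.
split; first by do 2!split=> //; apply: continuous_subspaceT => s; exact: cvg_id.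
by move=> M; exists (`|M| + 1); have := ler_norm M; have := normr_ge0 M; split; lra.
Qed.

Lemma classK_le (g : R -> R) a b : classK g -> 0 <= a -> a <= b -> g a <= g b.
Proof.
move=> [_ [_ g_lt]] a0; rewrite le_eqVlt => /predU1P[-> // | ab].
exact/ltW/g_lt.
Qed.

Lemma classK_ge0 (g : R -> R) a : classK g -> 0 <= a -> 0 <= g a.
Proof. by move=> gK a0; have := classK_le gK (lexx 0) a0; case: gK => ->. Qed.

Local Notation leb := (@lebesgue_measure R).

Lemma measurable_I0 t : measurable (I0 t).
Proof. exact: measurable_itv. Qed.

Lemma lebesgue_I0 t : 0 <= t -> leb (I0 t) = t%:E.
Proof.
rewrite le_eqVlt => /predU1P[<- | t0]; last by rewrite lebesgue_measure_itv/= lte_fin t0 sube0.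
by rewrite /I0 set_itv1 lebesgue_measure_set1.
Qed.

Lemma lebesgue_I0_lty t : 0 <= t -> (leb (I0 t) < +oo)%E.
Proof. by move=> t0; rewrite lebesgue_I0 ?ltry. Qed.

Lemma integral_cst_on (g : R -> R) c t : 0 <= t -> (forall s, 0 <= s <= t -> g s = c) ->
  leb.-integrable (I0 t) (EFin \o g) /\ (\int[leb]_(s in I0 t) (g s)%:E = (c * t)%:E)%E.
Proof.
move=> t0 gc; have gcE : {in I0 t, cst c%:E =1 EFin \o g}.
  by move=> s; rewrite inE /I0/= in_itv/= => /gc ->.
split.
- apply: eq_integrable (measurable_I0 t) _ _ gcE _.
  apply: (measurable_bounded_integrable (f := cst c)) (measurable_I0 t) _ _ _.
  - exact: lebesgue_I0_lty.
  - exact: measurable_cst.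
  - exact: bounded_cst.
- rewrite -(eq_integral _ _ gcE) integral_cst ?EFinM; last exact: measurable_I0.
  by congr (_ * _)%E; exact: lebesgue_I0.
Qed.

Lemma solution_coord_cstP n m (f : vec n -> vec m -> vec n) {xi : vec n} u x t i c :
  0 <= t -> (forall s, 0 <= s <= t -> f (x s) (u s) i = c) ->
  (leb.-integrable (I0 t) (fun s => (f (x s) (u s) i)%:E) /\
   ((x t i)%:E = (xi i)%:E + \int[leb]_(s in I0 t) (f (x s) (u s) i)%:E)%E)
  <-> x t i = xi i + c * t.
Proof.
move=> t0 fc; have [fint ->] := integral_cst_on t0 fc.
by rewrite -EFinD; split=> [[_ xtE] | ->]; [exact: EFin_inj | split].
Qed.

Lemma solution_coord_cst n m (f : vec n -> vec m -> vec n) xi u x t i c :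
  solution f xi u x -> 0 <= t -> (forall s, 0 <= s <= t -> f (x s) (u s) i = c) ->
  x t i = xi i + c * t.
Proof. by move=> xsol t0 fc; apply: (solution_coord_cstP t0 fc).1; exact: xsol. Qed.

Lemma integral_I0_ge (g : R -> R) c T t : 0 <= T <= t ->
  measurable_fun (I0 t) (g : mR -> mR) -> (forall s, 0 <= s <= t -> 0 <= g s) ->
  (forall s, 0 <= s <= T -> g s = c) -> ((c * T)%:E <= \int[leb]_(s in I0 t) (g s)%:E)%E.
Proof.
move=> /andP[T0 Tt] g_mble g0 gc; have [_ <-] := integral_cst_on T0 gc.
apply: ge0_subset_integral; [exact: measurable_I0 | exact: measurable_I0 | | | ].
- exact/measurable_realfun.measurable_EFinP.
- by move=> s; rewrite /I0/= in_itv/= => /g0; rewrite lee_fin.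
- by move=> s; rewrite /I0/= !in_itv/= => /andP[-> /le_trans->].
Qed.

Definition i0 : 'I_3 := @Ordinal 3 0 isT.
Definition i1 : 'I_3 := @Ordinal 3 1 isT.
Definition i2 : 'I_3 := @Ordinal 3 2 isT.

Definition vec3 (a b c : R) : vec 3 := fun i => nth 0 [:: a; b; c] i.

Lemma vec3_0 a b c : vec3 a b c i0 = a. Proof. by []. Qed.
Lemma vec3_1 a b c : vec3 a b c i1 = b. Proof. by []. Qed.
Lemma vec3_2 a b c : vec3 a b c i2 = c. Proof. by []. Qed.

Lemma ord3P (P : 'I_3 -> Prop) : P i0 -> P i1 -> P i2 -> forall i, P i.
Proof.
by move=> P0 P1 P2 [[|[|[|k]]] lt_k3]//; [move: P0 | move: P1 | move: P2];
  congr P; apply/val_inj.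
Qed.

Lemma sum3 (g : 'I_3 -> R) : \sum_(i < 3) g i = g i0 + g i1 + g i2.
Proof.
by rewrite !big_ord_recl big_ord0 addr0 addrA; congr (_ + _ + _); congr g; apply/val_inj.
Qed.

Lemma enorm3_le (x : vec 3) : enorm x <= `|x i0| + `|x i1| + `|x i2|.
Proof. by rewrite -(sum3 (fun i => `|x i|)) enorm_le_sum_abs. Qed.

Lemma enorm_vec3_0 (c : R) : enorm (vec3 0 0 c) = `|c|.
Proof. by rewrite /enorm sum3 /= expr0n /= !add0r sqrtr_sqr. Qed.

Definition gain (a c v : R) : R := Num.min (1 / 2) (Num.max 0 (v - `|c| * `|a|)).

Definition fex (x : vec 3) (u : vec 1) : vec 3 :=
  vec3 `|x i2| (gain (x i0) (x i2) (u ord0)) 0.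

Definition window (x : vec 3) : R := Num.min (Num.max 0 (x i1 - x i0)) `|x i0|.

Definition hex (x : vec 3) : vec 1 := fun=> `|x i2| * window x.

Lemma gain_ge0_le (a c v : R) : 0 <= gain a c v <= 1 / 2.
Proof.
by rewrite /gain ge_min lexx /= andbT le_min le_max lexx /= andbT; lra.
Qed.

Lemma gain_eq0 (a c v : R) : v <= `|c| * `|a| -> gain a c v = 0.
Proof. by move=> le_v; rewrite /gain max_l ?min_r; lra. Qed.

Lemma fex0 : fex (@vzero 3) (@vzero 1) = @vzero 3.
Proof.
apply/funext; apply: ord3P; rewrite /fex ?vec3_0 ?vec3_1 ?vec3_2 /vzero ?normr0//.
by rewrite gain_eq0// !normr0 mulr0.
Qed.

Lemma hex0 : hex (@vzero 3) = @vzero 1.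
Proof. by apply/funext => i; rewrite /hex /vzero normr0 mul0r. Qed.

Lemma dist_gain (a c v a' c' v' : R) :
  `|gain a c v - gain a' c' v'| <= `|v - v'| + `|c| * `|a - a'| + `|a'| * `|c - c'|.
Proof.
rewrite /gain; apply: le_trans (ler_dist_min _ _ _ _) _; rewrite subrr normr0 add0r.
apply: le_trans (ler_dist_max0 _ _) _.
have -> : v - `|c| * `|a| - (v' - `|c'| * `|a'|) = (v - v') - (`|c| * `|a| - `|c'| * `|a'|).
  by ring.
apply: le_trans (ler_normB _ _) _; rewrite -addrA lerD2l.
apply: le_trans (ler_dist_mul _ _ _ _) _; rewrite !normr_id.
by apply: lerD; apply: ler_wpM2l => //; exact: ler_dist_dist.
Qed.

Lemma window_ge0_le (x : vec 3) : 0 <= window x <= `|x i0|.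
Proof. by rewrite /window ge_min lexx orbT andbT le_min le_max lexx normr_ge0. Qed.

Lemma enorm_hex_le (x : vec 3) : enorm (hex x) <= `|x i2| * `|x i0|.
Proof.
have /andP[w0 wx] := window_ge0_le x.
by rewrite enorm1 normrM normr_id ger0_norm// ler_wpM2l.
Qed.

Lemma fex_loc_lipschitz : loc_lipschitz_f fex.
Proof.
move=> z w; set K := `|z i0| + `|z i2| + 1.
exists 1, (2 + 2 * K); split=> // x1 x2 u1 u2 near1 near2.
have bound (x : vec 3) (u : vec 1) :
    pnorm (vsub x z) (vsub u w) < 1 -> `|x i0| <= K /\ `|x i2| <= K.
  move=> /(le_lt_trans (enorm_le_pnorml _ _)) near.
  have := coord_le_ball i0 near; have := coord_le_ball i2 near.
  by rewrite /K; have := normr_ge0 (z i0); have := normr_ge0 (z i2); lra.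
have [x1_0 x1_2] := bound _ _ near1; have [x2_0 x2_2] := bound _ _ near2.
set P := pnorm (vsub x1 x2) (vsub u1 u2).
have dx i : `|x1 i - x2 i| <= P := le_trans (coord_le_enorm _ i) (enorm_le_pnorml _ _).
have du : `|u1 ord0 - u2 ord0| <= P := le_trans (coord_le_enorm _ _) (enorm_le_pnormr _ _).
have P0 : 0 <= P := le_trans (normr_ge0 _) du.
apply: le_trans (enorm3_le _) _; rewrite /vsub /= subrr normr0 addr0.
have e0 : `|x1 i2| * `|x1 i0 - x2 i0| <= K * P by rewrite ler_pM.
have e2 : `|x2 i0| * `|x1 i2 - x2 i2| <= K * P by rewrite ler_pM.
have := dist_gain (x1 i0) (x1 i2) (u1 ord0) (x2 i0) (x2 i2) (u2 ord0).
have := le_trans (ler_dist_dist (x1 i2) (x2 i2)) (dx i2).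
lra.
Qed.

Lemma dist_window (x y : vec 3) : `|window x - window y| <= 3 * enorm (vsub x y).
Proof.
rewrite /window; apply: le_trans (ler_dist_min _ _ _ _) _.
have d0 := coord_le_enorm (vsub x y) i0; have d1 := coord_le_enorm (vsub x y) i1.
rewrite /vsub in d0 d1.
have := ler_dist_max0 (x i1 - x i0) (y i1 - y i0).
have := ler_normB (x i1 - y i1) (x i0 - y i0).
have -> : x i1 - y i1 - (x i0 - y i0) = x i1 - x i0 - (y i1 - y i0) by ring.
have := le_trans (ler_dist_dist (x i0) (y i0)) d0.
lra.
Qed.

Lemma hex_loc_lipschitz : loc_lipschitz_h hex.
Proof.
move=> z; set K := `|z i0| + `|z i2| + 1.
exists 1, (4 * K); split=> // x y near_x near_y.
have x2K : `|x i2| <= K.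
  by have := coord_le_ball i2 near_x; rewrite /K; have := normr_ge0 (z i0); lra.
have y0K : `|y i0| <= K.
  by have := coord_le_ball i0 near_y; rewrite /K; have := normr_ge0 (z i2); lra.
set P := enorm (vsub x y).
have /andP[wy0 wyK] := window_ge0_le y.
rewrite enorm1 /vsub /hex; apply: le_trans (ler_dist_mul _ _ _ _) _; rewrite normr_id.
have e0 : `|x i2| * `|window x - window y| <= K * (3 * P).
  by rewrite ler_pM ?dist_window.
have e2 : `|window y| * `| `|x i2| - `|y i2| | <= K * P.
  apply: ler_pM; rewrite ?normr_ge0// ?(ger0_norm wy0); first exact: le_trans wyK y0K.
  exact: le_trans (ler_dist_dist _ _) (coord_le_enorm (vsub x y) i2).
lra.
Qed.

Definition drift (xi : vec 3) (t : R) : R := xi i0 + `|xi i2| * t.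

Definition gain_along (xi : vec 3) (u : R -> vec 1) (s : R) : R :=
  gain (drift xi s) (xi i2) (u s ord0).

Definition open_loop (xi : vec 3) (u : R -> vec 1) (t : R) : vec 3 :=
  vec3 (drift xi t) (xi i1 + fine (\int[leb]_(s in I0 t) (gain_along xi u s)%:E)%E) (xi i2).

Lemma measurable_gain_along xi u t : input u ->
  measurable_fun (I0 t) (gain_along xi u : mR -> mR).
Proof.
move=> [u_mble _]; rewrite /gain_along /gain.
have mu : measurable_fun (I0 t) ((fun s => u s ord0) : mR -> mR).
  apply: measurable_funS (measurable_itv _) _ (u_mble ord0).
  by move=> s; rewrite /I0/= !in_itv/= => /andP[->].
have md : measurable_fun (I0 t) (drift xi : mR -> mR).
  apply: measurable_realfun.measurable_funD; first exact: measurable_cst.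
  by apply: measurable_realfun.measurable_funM; [exact: measurable_cst | exact: measurable_id].
apply: measurable_realfun.measurable_minr; first exact: measurable_cst.
apply: measurable_realfun.measurable_maxr; first exact: measurable_cst.
apply: measurable_realfun.measurable_funB => //.
apply: measurable_realfun.measurable_funM; first exact: measurable_cst.
exact: measurableT_comp md.
Qed.

Lemma integrable_gain_along xi u t : input u -> 0 <= t ->
  leb.-integrable (I0 t) (EFin \o gain_along xi u).
Proof.
move=> iu t0; apply: measurable_bounded_integrable (measurable_I0 t) _ _ _.
- exact: lebesgue_I0_lty.
- exact: measurable_gain_along.
- exists 1; split; first by rewrite num_real.
  move=> M M1 s _; have /andP[g0 g_half] := gain_ge0_le (drift xi s) (xi i2) (u s ord0).
  by rewrite /= /gain_along ger0_norm//; lra.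
Qed.

Lemma open_loop_solution xi u : input u -> solution fex xi u (open_loop xi u).
Proof.
move=> iu t t0; apply: ord3P.
- by apply/(solution_coord_cstP (c := `|xi i2|)).
- split; first exact: integrable_gain_along.
  rewrite /open_loop /= EFinD fineK//.
  by apply: integrable_fin_num; [exact: measurable_I0 | exact: integrable_gain_along].
- by apply/(solution_coord_cstP (c := 0)); rewrite // mul0r addr0.
Qed.

Lemma fex_fwd_complete : fwd_complete (@input 1) fex.
Proof. by move=> xi u iu; exists (open_loop xi u); exact: open_loop_solution. Qed.

Definition closed_loop (x : vec 3) (d : vec 1) : vec 3 :=
  fex x (fun j => d j * enorm (hex x)).

Lemma closed_loopE x (d : vec 1) : `|d ord0| <= 1 -> closed_loop x d = vec3 `|x i2| 0 0.
Proof.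
move=> d1; rewrite /closed_loop /fex gain_eq0//.
have h0 := enorm_ge0 (hex x); apply: le_trans (enorm_hex_le x).
by apply: le_trans (ler_norm _) _; rewrite normrM (ger0_norm h0) ler_piMl.
Qed.

Definition closed_loop_traj (xi : vec 3) (t : R) : vec 3 := vec3 (drift xi t) (xi i1) (xi i2).

Lemma closed_loop_solution (d : R -> vec 1) xi : unit_input d ->
  solution closed_loop xi d (closed_loop_traj xi).
Proof.
move=> ud t t0.
have clE s : 0 <= s <= t -> closed_loop (closed_loop_traj xi s) (d s) = vec3 `|xi i2| 0 0.
  by move=> /andP[s0 _]; rewrite closed_loopE ?unit_input_le1.
apply: ord3P.
- by apply/(solution_coord_cstP (c := `|xi i2|)) => // s /clE ->.
- by apply/(solution_coord_cstP (c := 0)) => [//|s /clE -> //|]; rewrite mul0r addr0.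
- by apply/(solution_coord_cstP (c := 0)) => [//|s /clE -> //|]; rewrite mul0r addr0.
Qed.

Lemma closed_loop_solutionE (d : R -> vec 1) xi x : unit_input d ->
  solution closed_loop xi d x -> forall t, 0 <= t -> x t = closed_loop_traj xi t.
Proof.
move=> ud xsol; have clE s : 0 <= s -> closed_loop (x s) (d s) = vec3 `|x s i2| 0 0.
  by move=> s0; rewrite closed_loopE ?unit_input_le1.
have x2E t : 0 <= t -> x t i2 = xi i2.
  move=> t0; rewrite -[RHS]addr0 -(mul0r t).
  by apply: (solution_coord_cst xsol t0) => s /andP[/clE -> _].
move=> t t0; apply/funext; apply: ord3P => /=.
- apply: (solution_coord_cst xsol t0) => s /andP[s0 _].
  by rewrite clE//= x2E.
- rewrite -[RHS]addr0 -(mul0r t).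
  by apply: (solution_coord_cst xsol t0) => s /andP[/clE -> _].
- exact: x2E.
Qed.

Definition decay (s t : R) : R := 3 * s ^+ 2 / (1 + t).

Lemma decay_KL : classKL decay.
Proof.
split=> [t t0 | s s0].
- split; first by rewrite /decay expr0n /= mulr0 mul0r.
  split.
    apply: continuous_subspaceT => s; apply: cvgMr_tmp; apply: cvgMl_tmp.
    exact: exprn_continuous.
  move=> a b a0 ab; rewrite /decay ltr_pM2r ?invr_gt0 ?ltr_pM2l//; last lra.
  by rewrite ltrXn2r// ?(le_trans a0 (ltW ab)).
- split=> [t1 t2 t1_0 t12 | ].
    by rewrite /decay ler_wpM2l ?mulr_ge0 ?sqr_ge0 // lef_pV2 ?posrE; lra.
  rewrite -(mulr0 (3 * s ^+ 2)); apply: cvgMl_tmp.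
  apply/(@gtr0_cvgV0 _ _ _ _ (fun t : R => 1 + t)); last exact: cvg_addrl.
  by near=> t; rewrite ltr_pwDr//; near: t; apply: nbhs_pinfty_gt.
Unshelve. all: end_near. Qed.

Lemma max0_decay (a p q s t : R) : 0 <= a <= s -> `|p| <= s -> `|q| <= s -> 0 <= t ->
  a * Num.max 0 (q - (p + a * t)) * (1 + t) <= 3 * s ^+ 2.
Proof.
move=> /andP[a0 a_s] ps qs t0; have at0 : 0 <= a * t by rewrite mulr_ge0.
have s2 := sqr_ge0 s; case: (lerP (q - (p + a * t)) 0) => [b0 | b_gt0].
  by rewrite mulr0 mul0r mulr_ge0.
set b := q - (p + a * t) in b_gt0 *.
have b_le : b <= 2 * s - a * t by move: ps qs; rewrite /b !ler_norml; lra.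
have ab : a * b <= s * (2 * s) by apply: ler_pM; lra.
have atb : a * t * b <= a * t * (2 * s - a * t) by rewrite ler_wpM2l.
have := sqr_ge0 (a * t - s); rewrite !expr2 in s2 *; lra.
Qed.

Lemma closed_loop_output_decay xi t : 0 <= t ->
  enorm (hex (closed_loop_traj xi t)) <= decay (enorm xi) t.
Proof.
move=> t0; set x := closed_loop_traj xi t.
have w_le : window x <= Num.max 0 (xi i1 - (xi i0 + `|xi i2| * t)).
  by rewrite /window ge_min lexx.
have [w0 _] := andP (window_ge0_le x).
have a_s : 0 <= `|xi i2| <= enorm xi by rewrite normr_ge0 coord_le_enorm.
have := max0_decay a_s (coord_le_enorm xi i0) (coord_le_enorm xi i1) t0.
rewrite enorm1 /hex normrM normr_id (ger0_norm w0) /decay ler_pdivlMr ?ltr_pwDl//.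
apply: le_trans; rewrite ler_wpM2r ?ler_wpM2l ?addr_ge0//.
Qed.

Lemma fex_hex_ROS : ROS fex hex.
Proof.
split; first exact: fex_fwd_complete.
exists id; split; first exact: smooth_id.
split; first exact: classKinf_id.
split=> [xi d ud | ].
  by exists (closed_loop_traj xi); exact: closed_loop_solution.
exists decay; split=> [|xi d x ud xsol t t0]; first exact: decay_KL.
by rewrite (closed_loop_solutionE ud xsol t0); exact: closed_loop_output_decay.
Qed.

Definition unit_drive : R -> vec 1 := fun _ _ => 1.

Lemma input_unit_drive : input unit_drive.
Proof.
split=> [j | T]; first exact: measurable_cst.
by exists 1; apply: aeW => t _; rewrite enorm1 normr1.
Qed.

Lemma open_loop_peak K : 1 <= K ->
  enorm (hex (open_loop (vec3 0 0 (8 * K)^-1) unit_drive (64 * K ^+ 3))) = K.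
Proof.
move=> K1; set e := (8 * K)^-1; set xi := vec3 0 0 e; set t := 64 * K ^+ 3.
(* In terms of e: the dead zone closes at 32 K^2 = 1/(2 e^2), and t = 1/(8 e^3). *)
have K0 : 0 < K by lra.
have e0 : 0 < e by rewrite invr_gt0; lra.
have eK : e * (8 * K) = 1 by rewrite mulVf// gt_eqF//; lra.
have K2 := sqr_ge0 K.
have drift_xi s : drift xi s = e * s by rewrite /drift /= add0r gtr0_norm.
have peak_gain s : 0 <= s <= 32 * K ^+ 2 -> gain_along xi unit_drive s = 1 / 2.
  move=> /andP[s0 sT].
  have eeT : e * (e * (32 * K ^+ 2)) = 1 / 2.
    have -> : e * (e * (32 * K ^+ 2)) = (e * (8 * K)) ^+ 2 / 2 by field.
    by rewrite eK expr1n.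
  have ees : e * (e * s) <= 1 / 2 by rewrite -eeT !ler_pM2l.
  rewrite /gain_along /gain drift_xi /unit_drive (gtr0_norm e0).
  by rewrite (ger0_norm (mulr_ge0 (ltW e0) s0)) max_r ?min_l; lra.
have x1_ge : 16 * K ^+ 2 <= open_loop xi unit_drive t i1.
  have t0 : 0 <= t by rewrite /t mulr_ge0 ?exprn_ge0 ?ltW.
  have gint := integrable_gain_along xi (t := t) input_unit_drive t0.
  rewrite /open_loop /= add0r -lee_fin fineK; last first.
    by apply: integrable_fin_num; [exact: measurable_I0 | exact: gint].
  have -> : 16 * K ^+ 2 = 1 / 2 * (32 * K ^+ 2) by field.
  apply: integral_I0_ge.
  - rewrite mulr_ge0//= /t (_ : 64 * K ^+ 3 = 32 * K ^+ 2 * (2 * K)); last by ring.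
    by rewrite ler_peMr ?mulr_ge0//; lra.
  - exact: measurable_gain_along input_unit_drive.
  - by move=> s _; have /andP[] := gain_ge0_le (drift xi s) (xi i2) (unit_drive s ord0).
  - exact: peak_gain.
have x0E : open_loop xi unit_drive t i0 = 8 * K ^+ 2.
  rewrite /open_loop vec3_0 drift_xi /t.
  have -> : e * (64 * K ^+ 3) = e * (8 * K) * (8 * K ^+ 2) by ring.
  by rewrite eK mul1r.
have x2E : open_loop xi unit_drive t i2 = e by [].
have K8 : 0 <= 8 * K ^+ 2 by rewrite mulr_ge0.
rewrite enorm1 /hex /window x0E x2E (ger0_norm K8) max_r ?min_r; try lra.
have -> : `|e| * (8 * K ^+ 2) = e * (8 * K) * K by rewrite gtr0_norm//; ring.
by rewrite eK mul1r gtr0_norm.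
Qed.

Lemma input_norm_unit_drive : exists M, input_norm unit_drive = M%:E /\ 0 <= M <= 1.
Proof.
have leb_gt0 : (0 < leb [set: mR])%E.
  apply: (@lt_le_trans _ _ (leb (I0 1))); first by rewrite lebesgue_I0// lte_fin.
  by apply: le_measure; rewrite ?inE//; exact: measurable_I0.
have le1 : (input_norm unit_drive <= 1%:E)%E.
  by apply/ess_supP; apply: aeW => t /=; case: ifP; rewrite ?enorm1 ?normr1 ?lee_fin.
have ge0 : (0%:E <= input_norm unit_drive)%E.
  by apply: ess_sup_gee leb_gt0 _; apply: aeW => t /=; case: ifP; rewrite ?lee_fin ?enorm_ge0.
exists (fine (input_norm unit_drive)); rewrite fineK ?ge0_fin_numE ?(le_lt_trans le1) ?ltry//.
by rewrite -lee_fin -(lee_fin _ 1) fineK ?ge0_fin_numE ?(le_lt_trans le1) ?ltry// ge0 le1.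
Qed.

Lemma fex_hex_not_IOS : ~ IOS fex hex.
Proof.
move=> [_ [beta [gamma [[betaK beta_dec] [gammaK ios]]]]].
have [M [uM /andP[M0 M1]]] := input_norm_unit_drive.
have b0 : 0 <= beta 1 0 := classK_ge0 (betaK 0 (lexx 0)) ler01.
have g0 : 0 <= gamma 1 := classK_ge0 gammaK ler01.
set K := beta 1 0 + gamma 1 + 1; have K1 : 1 <= K by rewrite /K; lra.
set e := (8 * K)^-1; have e0 : 0 < e by rewrite invr_gt0; lra.
have e1 : e <= 1 by rewrite invf_le1; lra.
have t0 : 0 <= 64 * K ^+ 3 by rewrite mulr_ge0 ?exprn_ge0//; lra.
have := ios _ _ _ _ input_unit_drive (open_loop_solution (vec3 0 0 e) input_unit_drive) uM _ t0.
rewrite open_loop_peak// enorm_vec3_0 (gtr0_norm e0).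
have := (beta_dec e (ltW e0)).1 0 _ (lexx 0) t0.
have := classK_le (betaK 0 (lexx 0)) (ltW e0) e1.
have := classK_le gammaK M0 M1.
rewrite /K; lra.
Qed.

Theorem lemma2p5 :
  exists (n m p : nat) (f : vec n -> vec m -> vec n) (h : vec n -> vec p),
    loc_lipschitz_f f /\ loc_lipschitz_h h /\
    f (@vzero n) (@vzero m) = @vzero n /\ h (@vzero n) = @vzero p /\
    ROS f h /\ ~ IOS f h.
Proof.
exists 3%N, 1%N, 1%N, fex, hex.
split; first exact: fex_loc_lipschitz.
split; first exact: hex_loc_lipschitz.
split; first exact: fex0.
split; first exact: hex0.
split; [exact: fex_hex_ROS | exact: fex_hex_not_IOS].
Qed.
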